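(* Let $(a,b)$ be an open interval with $0\in(a,b)$, let $n\ge 2$ be an integer and $C\ge 0$ a constant, and let $f\in C^\infty(a,b)$ (real or complex valued) satisfy $$|f^{(n)}(x)|\le C\sum_{k=0}^{n-1}\frac{|f^{(k)}(x)|}{|x|^{n-k}},\qquad x\in(a,b)\setminus\{0\}.$$ If $f\not\equiv 0$ on $(a,b)$, then $f$ has finite vanishing order $N$ at $0$, i.e. there is an integer $N\ge 0$ with $f^{(j)}(0)=0$ for all $0\le j<N$ and $f^{(N)}(0)\neq 0$ (so $f(x)=a_Nx^N+O(x^{N+1})$ near $0$ with $a_N\neq 0$), and moreover $$N\le B_nC+n-1,\qquad B_n=\sum_{k=0}^{n-1}\frac{1}{k!}.$$ *)

From Stdlib Require Export Reals Arith.
Open Scope R_scope.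

(* A function f is C^infty on (a,b) iff such a family with D 0 = f exists. *)
Definition derivs_on (a b : R) (D : nat -> R -> R) : Prop :=
  forall (k : nat) (x : R), a < x < b -> derivable_pt_lim (D k) x (D (S k) x).

(* modulus of the complex number u + i v *)
Definition cmod (u v : R) : R := sqrt (u * u + v * v).

Definition Bn (n : nat) : R := sum_f_R0 (fun k => / INR (fact k)) (n - 1).

From Stdlib Require Import Reals Lra Lia Classical Wf_nat.
Open Scope R_scope.

(* Write f = U 0 + i V 0, with f^(k) = U k + i V k on (a,b) and
   |f^(n)(x)| <= C sum_{k<n} |f^(k)(x)| / |x|^(n-k).  The key claim ([flat])
   is that if f vanishes at 0 to some order N > B_n C + n - 1, then f = 0.
   On [0,x] the maximum of |f^(N)| bounds |f^(n-1)(s)| by A s^p with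
   p = N - n + 1 ([iterated_bound], repeated integration from 0).  Feeding
   such a bound into the inequality and integrating once more improves it to
   (C B_n / p) A s^p ([self_improve]); since C B_n / p < 1, iterating forces
   f^(n-1) = 0, whence f = 0 on [0,b).  The left half follows by the
   reflection x |-> -x.  The theorem is then immediate: f has a first
   nonvanishing derivative at 0, and [flat] bounds its order. *)

Lemma cmod_nonneg (u v : R) : 0 <= cmod u v.
Proof. unfold cmod; apply sqrt_pos. Qed.

Lemma cmod_sq (u v : R) : cmod u v * cmod u v = u * u + v * v.
Proof. unfold cmod; apply sqrt_sqrt; nra. Qed.

Lemma cmod_eq0 (u v : R) : cmod u v = 0 -> u = 0 /\ v = 0.
Proof. intros H; pose proof (cmod_sq u v) as Hsq; rewrite H in Hsq; nra. Qed.

Lemma unit_projection_le (al be u v : R) :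
  al * al + be * be = 1 -> al * u + be * v <= cmod u v.
Proof.
  intros Hunit.
  pose proof (cmod_nonneg u v) as Hc; pose proof (cmod_sq u v) as Hsq.
  destruct (Rle_or_lt (al * u + be * v) 0) as [Hle | Hpos]; [lra |].
  assert (Hsq_le : (al * u + be * v) * (al * u + be * v) <= cmod u v * cmod u v).
  { rewrite Hsq; pose proof (Rle_0_sqr (al * v - be * u)); unfold Rsqr in *; nra. }
  nra.
Qed.

Lemma cmod_direction (u v : R) :
  exists al be, al * al + be * be = 1 /\ al * u + be * v = cmod u v.
Proof.
  pose proof (cmod_sq u v) as Hsq; pose proof (cmod_nonneg u v) as Hc.
  destruct (Req_dec (cmod u v) 0) as [H0 | Hne].
  - destruct (cmod_eq0 u v H0) as [-> ->]; exists 1, 0; rewrite H0; split; ring.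
  - exists (u / cmod u v), (v / cmod u v); split.
    + apply (Rmult_eq_reg_r (cmod u v * cmod u v)); [| nra].
      field_simplify; [lra | exact Hne].
    + apply (Rmult_eq_reg_r (cmod u v)); [| exact Hne].
      field_simplify; [lra | exact Hne].
Qed.

(* Integrating a growth bound: if h(0) = 0 and h' <= K s^i on (0,x),
   then h(x) <= K x^(i+1)/(i+1).  (Mean value theorem applied to
   h - K s^(i+1)/(i+1).) *)
Lemma scalar_growth_bound (h h' : R -> R) (K : R) (i : nat) (x : R) :
  0 <= x -> h 0 = 0 ->
  (forall s, 0 <= s <= x -> derivable_pt_lim h s (h' s)) ->
  (forall s, 0 < s < x -> h' s <= K * s ^ i) ->
  h x <= K * x ^ S i / INR (S i).
Proof.
  intros Hx Hh0 Hder Hbound.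
  assert (HSi : 0 < INR (S i)) by (apply lt_0_INR; lia).
  destruct (Req_dec x 0) as [-> | Hx0].
  { rewrite Hh0; simpl; unfold Rdiv; rewrite Rmult_0_l, Rmult_0_r, Rmult_0_l; lra. }
  set (g := fun s => h s - K * s ^ S i / INR (S i)).
  assert (Hgder : forall s, 0 <= s <= x -> derivable_pt_lim g s (h' s - K * s ^ i)).
  { intros s Hs; unfold g.
    apply (derivable_pt_lim_minus h (fun y => K * y ^ S i / INR (S i))); [now apply Hder |].
    replace (K * s ^ i) with (K / INR (S i) * (INR (S i) * s ^ pred (S i)))
      by (cbn [pred]; field; lra).
    apply (derivable_pt_lim_ext (fun y => K / INR (S i) * y ^ S i)); [intros; field; lra |].
    apply derivable_pt_lim_scal, derivable_pt_lim_pow. }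
  destruct (MVT_cor2 g _ 0 x ltac:(lra) Hgder) as [c [Hmvt Hc]].
  pose proof (Hbound c Hc).
  unfold g in Hmvt; rewrite Hh0 in Hmvt; simpl in Hmvt |- *.
  replace (K * (0 * 0 ^ i) / INR (S i)) with 0 in Hmvt by (unfold Rdiv; ring).
  nra.
Qed.

(* The same bound for a complex-valued function u + iv, reduced to the
   scalar case by projecting on the direction of u(x) + iv(x). *)
Lemma cmod_growth_bound (u v u' v' : R -> R) (K : R) (i : nat) (x : R) :
  0 <= x -> u 0 = 0 -> v 0 = 0 ->
  (forall s, 0 <= s <= x -> derivable_pt_lim u s (u' s)) ->
  (forall s, 0 <= s <= x -> derivable_pt_lim v s (v' s)) ->
  (forall s, 0 < s < x -> cmod (u' s) (v' s) <= K * s ^ i) ->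
  cmod (u x) (v x) <= K * x ^ S i / INR (S i).
Proof.
  intros Hx Hu0 Hv0 Hu Hv Hbound.
  destruct (cmod_direction (u x) (v x)) as [al [be [Hunit Hdir]]].
  rewrite <- Hdir.
  apply (scalar_growth_bound (fun s => al * u s + be * v s)
                             (fun s => al * u' s + be * v' s)); [exact Hx | rewrite Hu0, Hv0; ring | |].
  - intros s Hs; apply derivable_pt_lim_plus; apply derivable_pt_lim_scal; auto.
  - intros s Hs; eapply Rle_trans; [apply unit_projection_le, Hunit | auto].
Qed.
(* p!/(p+j)!: the constant produced by integrating s^p  j  times from 0. *)
Definition ratio_fact (p j : nat) : R := INR (fact p) / INR (fact (p + j)).

Lemma ratio_fact_nonneg (p j : nat) : 0 <= ratio_fact p j.
Proof.
  unfold ratio_fact; apply Rmult_le_pos; [apply pos_INR |].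
  left; apply Rinv_0_lt_compat, lt_0_INR, lt_O_fact.
Qed.

Lemma ratio_fact_succ (p j : nat) :
  ratio_fact p j / INR (S (p + j)) = ratio_fact p (S j).
Proof.
  unfold ratio_fact; rewrite Nat.add_succ_r, fact_simpl, mult_INR.
  assert (INR (fact (p + j)) <> 0) by (apply not_0_INR, fact_neq_0).
  assert (INR (S (p + j)) <> 0) by (apply not_0_INR; lia).
  field; split; assumption.
Qed.

(* p! j! <= (p+j)!, i.e. binomial coefficients are >= 1. *)
Lemma fact_mul_le (p j : nat) : (fact p * fact j <= fact (p + j))%nat.
Proof.
  induction j as [| j IH].
  - simpl; rewrite Nat.add_0_r; lia.
  - rewrite Nat.add_succ_r, !fact_simpl; nia.
Qed.

Lemma ratio_fact_le (p j : nat) : ratio_fact p j <= / INR (fact j).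
Proof.
  unfold ratio_fact.
  assert (Hle := le_INR _ _ (fact_mul_le p j)); rewrite mult_INR in Hle.
  assert (0 < INR (fact j)) by apply lt_0_INR, lt_O_fact.
  assert (0 < INR (fact (p + j))) by apply lt_0_INR, lt_O_fact.
  apply (Rmult_le_reg_r (INR (fact (p + j)) * INR (fact j))); [nra |].
  field_simplify; lra.
Qed.

Lemma sum_reverse (g : nat -> R) (m : nat) :
  sum_f_R0 (fun k => g (m - k)%nat) m = sum_f_R0 g m.
Proof.
  revert g; induction m as [| m IH]; intros g; [reflexivity |].
  rewrite decomp_sum by lia; cbn [pred]; rewrite Nat.sub_0_r.
  rewrite (sum_eq _ (fun k => g (m - k)%nat)) by (intros; f_equal; lia).
  rewrite IH; simpl; ring.
Qed.

(* The constants met when bounding the right-hand side of the differential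
   inequality sum up to at most B_n. *)
Lemma sum_ratio_fact_le_Bn (p n : nat) :
  sum_f_R0 (fun k => ratio_fact p (n - 1 - k)) (n - 1) <= Bn n.
Proof.
  rewrite (sum_reverse (ratio_fact p)); unfold Bn.
  apply sum_Rle; intros; apply ratio_fact_le.
Qed.

Lemma Bn_nonneg (n : nat) : 0 <= Bn n.
Proof.
  unfold Bn; apply cond_pos_sum; intros.
  left; apply Rinv_0_lt_compat, lt_0_INR, lt_O_fact.
Qed.

Lemma geometric_squeeze (c K q : R) :
  0 <= K -> 0 <= q < 1 -> (forall m, c <= K * q ^ m) -> c <= 0.
Proof.
  intros HK Hq Hc; destruct (Rle_or_lt c 0) as [| Hpos]; [assumption |].
  destruct (pow_lt_1_zero q ltac:(rewrite Rabs_right; lra) (c / (K + 1)))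
    as [m Hm]; [apply Rdiv_lt_0_compat; lra |].
  specialize (Hm m (le_n m)); specialize (Hc m).
  rewrite Rabs_right in Hm by (apply Rle_ge, pow_le; lra).
  assert (K * q ^ m <= K * (c / (K + 1))) by (apply Rmult_le_compat_l; lra).
  assert (K * (c / (K + 1)) < c) by (apply (Rmult_lt_reg_r (K + 1)); [lra | field_simplify; lra]).
  lra.
Qed.

Notation dmod U V k s := (cmod (U k s) (V k s)).

Definition vanish_to (U V : nat -> R -> R) (N : nat) : Prop :=
  forall j, (j < N)%nat -> U j 0 = 0 /\ V j 0 = 0.

Definition ode_ineq (a b : R) (n : nat) (C : R) (U V : nat -> R -> R) : Prop :=
  forall x, a < x < b -> x <> 0 ->
    dmod U V n x <= C * sum_f_R0 (fun k => dmod U V k x / Rabs x ^ (n - k)) (n - 1).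

Section RightHalf.

Variables (a b : R) (U V : nat -> R -> R).
Hypothesis Ha : a < 0.
Hypothesis HU : derivs_on a b U.
Hypothesis HV : derivs_on a b V.

Lemma dmod_continuous (k : nat) (c : R) :
  a < c < b -> continuity_pt (fun s => dmod U V k s) c.
Proof.
  intros Hc.
  assert (continuity_pt (U k) c) by (apply derivable_continuous_pt; eexists; now apply HU).
  assert (continuity_pt (V k) c) by (apply derivable_continuous_pt; eexists; now apply HV).
  apply (continuity_pt_comp (fun s => U k s * U k s + V k s * V k s) sqrt).
  - apply continuity_pt_plus; apply continuity_pt_mult; assumption.
  - apply continuity_pt_sqrt; nra.
Qed.

Lemma antiderivative_bound (k : nat) (K : R) (i : nat) (x : R) :
  0 <= x < b -> U k 0 = 0 -> V k 0 = 0 ->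
  (forall s, 0 < s < x -> dmod U V (S k) s <= K * s ^ i) ->
  dmod U V k x <= K * x ^ S i / INR (S i).
Proof.
  intros Hx HU0 HV0 Hbound.
  apply (cmod_growth_bound (U k) (V k) (U (S k)) (V (S k))); try tauto;
    intros s Hs; [apply HU | apply HV]; lra.
Qed.

Lemma iterated_bound (m p : nat) (A x0 : R) :
  x0 < b -> vanish_to U V m ->
  (forall s, 0 <= s <= x0 -> dmod U V m s <= A * s ^ p) ->
  forall j, (j <= m)%nat -> forall s, 0 <= s <= x0 ->
    dmod U V (m - j)%nat s <= A * ratio_fact p j * s ^ (p + j).
Proof.
  intros Hx0 Hvan Hm j; induction j as [| j IH]; intros Hj s Hs.
  - rewrite Nat.sub_0_r, Nat.add_0_r; unfold ratio_fact; rewrite Nat.add_0_r.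
    replace (A * (INR (fact p) / INR (fact p))) with A; [auto |].
    field; apply not_0_INR, fact_neq_0.
  - destruct (Hvan (m - S j)%nat ltac:(lia)) as [HU0 HV0].
    rewrite <- ratio_fact_succ, Nat.add_succ_r.
    replace (A * (ratio_fact p j / INR (S (p + j)))) with ((A * ratio_fact p j) / INR (S (p + j)))
      by (unfold Rdiv; ring).
    unfold Rdiv; rewrite Rmult_assoc, (Rmult_comm (/ _)), <- Rmult_assoc.
    apply antiderivative_bound; [lra | assumption | assumption |].
    intros t Ht; replace (S (m - S j)) with (m - j)%nat by lia.
    apply IH; [lia | lra].
Qed.

Variables (n : nat) (C : R).
Hypothesis Hn : (2 <= n)%nat.
Hypothesis HC : 0 <= C.
Hypothesis Hineq : ode_ineq a b n C U V.

(* If |f^(n-1)| <= A s^p on [0,x0] and f vanishes to order n at 0, then the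
   differential inequality gives |f^(n)(t)| <= C B_n A t^(p-1) on (0,x0]:
   each term |f^(k)(t)|/t^(n-k) is controlled by integrating n-1-k times. *)
Lemma ode_rhs_bound (p : nat) (A x0 : R) :
  (1 <= p)%nat -> 0 <= A -> x0 < b -> vanish_to U V n ->
  (forall s, 0 <= s <= x0 -> dmod U V (n - 1)%nat s <= A * s ^ p) ->
  forall t, 0 < t <= x0 -> dmod U V n t <= C * Bn n * A * t ^ (p - 1).
Proof.
  intros Hp HA Hx0 Hvan Hbound t Ht.
  assert (Hvan1 : vanish_to U V (n - 1)) by (intros j Hj; apply Hvan; lia).
  assert (Htp : 0 <= A * t ^ (p - 1)) by (apply Rmult_le_pos; [| apply pow_le]; lra).
  eapply Rle_trans; [apply Hineq; lra |].
  rewrite Rabs_right by lra; rewrite !Rmult_assoc; apply Rmult_le_compat_l; [exact HC |].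
  apply Rle_trans with (sum_f_R0 (fun k => ratio_fact p (n - 1 - k) * (A * t ^ (p - 1))) (n - 1)).
  - apply sum_Rle; intros k Hk.
    pose proof (iterated_bound (n - 1) p A x0 Hx0 Hvan1 Hbound (n - 1 - k) ltac:(lia) t
                  ltac:(lra)) as Hterm.
    replace (n - 1 - (n - 1 - k))%nat with k in Hterm by lia.
    replace (p + (n - 1 - k))%nat with (p - 1 + (n - k))%nat in Hterm by lia.
    rewrite pow_add in Hterm.
    assert (0 < t ^ (n - k)) by (apply pow_lt; lra).
    apply (Rmult_le_reg_r (t ^ (n - k))); [assumption |].
    unfold Rdiv; rewrite Rmult_assoc, Rinv_l by lra; nra.
  - rewrite <- scal_sum, Rmult_comm; apply Rmult_le_compat_r;
      [exact Htp | apply sum_ratio_fact_le_Bn].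
Qed.

Lemma self_improve (p : nat) (A x0 : R) :
  (1 <= p)%nat -> 0 <= A -> x0 < b -> vanish_to U V n ->
  (forall s, 0 <= s <= x0 -> dmod U V (n - 1)%nat s <= A * s ^ p) ->
  forall s, 0 <= s <= x0 -> dmod U V (n - 1)%nat s <= (C * Bn n / INR p) * A * s ^ p.
Proof.
  intros Hp HA Hx0 Hvan Hbound s Hs.
  assert (0 < INR p) by (apply lt_0_INR; lia).
  destruct (Hvan (n - 1)%nat ltac:(lia)) as [HU0 HV0].
  eapply Rle_trans.
  - apply (antiderivative_bound (n - 1) (C * Bn n * A) (p - 1) s); [lra | assumption | assumption |].
    intros t Ht; replace (S (n - 1)) with n by lia.
    apply (ode_rhs_bound p A x0); auto; lra.
  - replace (S (p - 1)) with p by lia; right; field; lra.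
Qed.

(* Flatness on the right: if f vanishes at 0 to an order N > B_n C + n - 1,
   then f = 0 on [0,b).  Bounding |f^(N)| by its maximum M on [0,x] gives
   |f^(n-1)| <= A s^p with p = N - n + 1 > C B_n; self-improvement with the
   factor C B_n / p < 1 then forces |f^(n-1)| = 0, and so f = 0 on [0,x]. *)
Lemma flat_right (N : nat) :
  Bn n * C + INR n - 1 < INR N -> vanish_to U V N ->
  forall x, 0 <= x < b -> U 0%nat x = 0 /\ V 0%nat x = 0.
Proof.
  intros HN Hvan x Hx.
  pose proof (Bn_nonneg n) as HB.
  assert (HnN : (n <= N)%nat).
  { assert (Hlt : INR (n - 1) < INR N) by (rewrite minus_INR by lia; simpl; nra).
    apply INR_lt in Hlt; lia. }
  destruct (Req_dec x 0) as [-> | Hx0]; [apply Hvan; lia |].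
  set (p := (N - n + 1)%nat).
  assert (HpI : INR p = INR N - INR n + 1)
    by (unfold p; rewrite plus_INR, minus_INR by lia; simpl; ring).
  set (q := C * Bn n / INR p).
  assert (Hq : 0 <= q < 1).
  { unfold q; assert (0 < INR p) by (rewrite HpI; nra); split.
    - apply Rmult_le_pos; [nra | left; apply Rinv_0_lt_compat; lra].
    - apply (Rmult_lt_reg_r (INR p)); [lra | field_simplify; nra]. }
  destruct (continuity_ab_maj (fun s => dmod U V N s) 0 x ltac:(lra)) as [xM [HM HxM]].
  { intros c Hc; apply dmod_continuous; lra. }
  set (A := dmod U V N xM * ratio_fact 0 p).
  assert (HA : 0 <= A) by (apply Rmult_le_pos; [apply cmod_nonneg | apply ratio_fact_nonneg]).
  assert (Hvann : vanish_to U V n) by (intros j Hj; apply Hvan; lia).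
  assert (Hstart : forall s, 0 <= s <= x -> dmod U V (n - 1)%nat s <= A * s ^ p).
  { intros s Hs; replace (n - 1)%nat with (N - p)%nat by (unfold p; lia).
    apply (iterated_bound N 0 _ x); auto; [lra | intros t Ht; simpl; rewrite Rmult_1_r; auto | unfold p; lia]. }
  assert (Hiter : forall m s, 0 <= s <= x -> dmod U V (n - 1)%nat s <= A * s ^ p * q ^ m).
  { induction m as [| m IH]; intros s Hs; [simpl; rewrite Rmult_1_r; auto |].
    eapply Rle_trans.
    - apply (self_improve p (A * q ^ m) x); try (unfold p; lia); try lra;
        [apply Rmult_le_pos; [| apply pow_le]; lra | exact Hvann |].
      intros t Ht; eapply Rle_trans; [apply IH; exact Ht | right; ring].
    - right; fold q; simpl; ring. }
  assert (Hzero : forall s, 0 <= s <= x -> dmod U V (n - 1)%nat s <= 0 * s ^ p).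
  { intros s Hs; rewrite Rmult_0_l.
    apply (geometric_squeeze _ (A * s ^ p) q); [apply Rmult_le_pos; [| apply pow_le]; lra | exact Hq |].
    intro m; apply Hiter; exact Hs. }
  pose proof (iterated_bound (n - 1) p 0 x ltac:(lra) ltac:(intros j Hj; apply Hvan; lia)
                Hzero (n - 1) (le_n _) x ltac:(lra)) as Hf.
  rewrite Nat.sub_diag, !Rmult_0_l in Hf.
  apply cmod_eq0; pose proof (cmod_nonneg (U 0%nat x) (V 0%nat x)); lra.
Qed.

End RightHalf.

(* Reflection x |-> -x maps the k-th derivative of f to (-1)^k f^(k)(-x). *)
Definition reflect (U : nat -> R -> R) : nat -> R -> R :=
  fun k t => (-1) ^ k * U k (- t).

Lemma reflect_derivs (a b : R) (U : nat -> R -> R) :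
  derivs_on a b U -> derivs_on (- b) (- a) (reflect U).
Proof.
  intros HU k t Ht; unfold reflect.
  replace ((-1) ^ S k * U (S k) (- t)) with ((-1) ^ k * - U (S k) (- t)) by (simpl; ring).
  apply (derivable_pt_lim_scal (mirr_fct (U k))), derivable_pt_lim_mirr_fwd.
  rewrite Ropp_involutive; apply HU; lra.
Qed.

Lemma reflect_dmod (U V : nat -> R -> R) (k : nat) (t : R) :
  dmod (reflect U) (reflect V) k t = dmod U V k (- t).
Proof.
  unfold reflect, cmod; f_equal.
  assert (Hsign : (-1) ^ k * (-1) ^ k = 1)
    by (rewrite <- pow_add; replace (k + k)%nat with (2 * k)%nat by lia; apply pow_1_even).
  transitivity ((-1) ^ k * (-1) ^ k * (U k (- t) * U k (- t) + V k (- t) * V k (- t))); [ring |].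
  rewrite Hsign; ring.
Qed.

Lemma reflect_ode_ineq (a b : R) (n : nat) (C : R) (U V : nat -> R -> R) :
  ode_ineq a b n C U V -> ode_ineq (- b) (- a) n C (reflect U) (reflect V).
Proof.
  intros Hineq t Ht Ht0; rewrite reflect_dmod.
  rewrite (sum_eq _ (fun k => dmod U V k (- t) / Rabs (- t) ^ (n - k)))
    by (intros; rewrite reflect_dmod, Rabs_Ropp; reflexivity).
  apply Hineq; lra.
Qed.

Lemma reflect_vanish_to (U V : nat -> R -> R) (N : nat) :
  vanish_to U V N -> vanish_to (reflect U) (reflect V) N.
Proof.
  intros Hvan j Hj; unfold reflect; rewrite Ropp_0.
  destruct (Hvan j Hj) as [-> ->]; split; ring.
Qed.

Lemma flat (a b : R) (n : nat) (C : R) (U V : nat -> R -> R) (N : nat) :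
  a < 0 < b -> (2 <= n)%nat -> 0 <= C ->
  derivs_on a b U -> derivs_on a b V -> ode_ineq a b n C U V ->
  Bn n * C + INR n - 1 < INR N -> vanish_to U V N ->
  forall x, a < x < b -> U 0%nat x = 0 /\ V 0%nat x = 0.
Proof.
  intros Hab Hn HC HU HV Hineq HN Hvan x Hx.
  destruct (Rle_or_lt 0 x) as [Hx0 | Hx0].
  - apply (flat_right a b U V) with n C N; tauto.
  - destruct (flat_right (- b) (- a) (reflect U) (reflect V) ltac:(lra)
                (reflect_derivs a b U HU) (reflect_derivs a b V HV) n C Hn HC
                (reflect_ode_ineq a b n C U V Hineq) N HN (reflect_vanish_to U V N Hvan)
                (- x) ltac:(lra)) as [HU0 HV0].
    unfold reflect in HU0, HV0; simpl in HU0, HV0; rewrite Ropp_involutive in HU0, HV0.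
    split; lra.
Qed.

(* The first nonvanishing derivative at 0 exists, since
   otherwise f would vanish to every order and hence be zero by [flat];
   taking the least such order N, [flat] again shows N <= B_n C + n - 1. *)
Theorem lemma8 (a b : R) (n : nat) (C : R) (U V : nat -> R -> R) :
  a < 0 < b -> (2 <= n)%nat -> 0 <= C ->
  derivs_on a b U -> derivs_on a b V ->
  (forall x, a < x < b -> x <> 0 ->
     cmod (U n x) (V n x) <=
     C * sum_f_R0 (fun k => cmod (U k x) (V k x) / Rabs x ^ (n - k)) (n - 1)) ->
  (exists x, a < x < b /\ (U 0%nat x <> 0 \/ V 0%nat x <> 0)) ->
  exists N : nat,
    (forall j, (j < N)%nat -> U j 0 = 0 /\ V j 0 = 0) /\
    (U N 0 <> 0 \/ V N 0 <> 0) /\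
    INR N <= Bn n * C + INR n - 1.
Proof.
  intros Hab Hn HC HU HV Hineq [x [Hx Hnz]].
  set (nonzero := fun j => U j 0 <> 0 \/ V j 0 <> 0).
  assert (Hnot_flat : forall N, vanish_to U V N -> INR N <= Bn n * C + INR n - 1).
  { intros N Hvan; apply Rnot_lt_le; intros HN.
    destruct (flat a b n C U V N Hab Hn HC HU HV Hineq HN Hvan x Hx); tauto. }
  assert (Hex : exists j, nonzero j).
  { apply NNPP; intros Hall.
    destruct (INR_unbounded (Bn n * C + INR n - 1)) as [N HN].
    apply (Rlt_not_le _ _ HN), Hnot_flat.
    intros j _; split; apply NNPP; intros Hj; apply Hall; exists j; red; tauto. }
  destruct (dec_inh_nat_subset_has_unique_least_element nonzero
              (fun j => classic (nonzero j)) Hex) as [N [[HN Hleast] _]].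
  assert (Hvan : vanish_to U V N).
  { intros j Hj; split; apply NNPP; intros Hj0;
      specialize (Hleast j ltac:(red; tauto)); lia. }
  exists N; split; [exact Hvan | split; [exact HN | now apply Hnot_flat]].
Qed.
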